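(* Fix $\theta\in\mathbb{R}$ (playing the role of $at$). There exists $C>0$ such that for every grid size $N\in\mathbb{N}$ there exists a ReLU FNO $\mathcal{N}^{\mathrm{FNO}}$ with $k_{\max}=1$, $d_v\le C$, depth $\le C$, size $\le C$ such that \[ \sup_{h,w,\xi}\sup_{x\in\mathbb{T}}\big|\mathcal{N}^{\mathrm{FNO}}(\bar u)(x)-\sin(w/2)\cos(x-\xi-\theta)\big|\le\frac CN, \] where $\bar u=h\,1_{[-w/2,w/2]}(\cdot-\xi)$ and the supremum is over $h\in[\underline h,\overline h]$, $w\in[\underline w,\overline w]$, $\xi\in[0,2\pi]$.
   Context: $\mathbb{T}=\mathbb{R}/2\pi\mathbb{Z}$; fixed $0<\underline h\le\overline h$, $0<\underline w\le\overline w<2\pi$; $1_{[-w/2,w/2]}$ is periodized. FNO with grid size $N$: $x_j=2\pi j/N$, $\mathcal{F}_Nv(k)=\frac1N\sum_{j=1}^Nv(x_j)e^{-ikx_j}$; an FNO with lifting dimension $d_v$, cut-off $k_{\max}$, depth $L$, ReLU $\sigma$ is $Q\circ\mathcal{L}_L\circ\dots\circ\mathcal{L}_1\circ R$, $(R\bar u)(x)=R(\bar u(x),x)$ ($R$ a shallow ReLU network into $\mathbb{R}^{d_v}$), $(\mathcal{L}_\ell v)(x)=\sigma(W_\ell v(x)+b_\ell(x)+\sum_{|k|\le k_{\max}}P_\ell(k)\mathcal{F}_Nv(k)e^{ikx})$ with $W_\ell\in\mathbb{R}^{d_v\times d_v}$, $P_\ell(k)\in\mathbb{C}^{d_v\times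 d_v}$, real bias $b_\ell(x)=\sum_{|k|\le k_{\max}}\hat b_\ell(k)e^{ikx}$, $Q$ linear pointwise; outputs are defined for all $x\in\mathbb{T}$. Depth $=L$; size = number of tunable parameters. *)

From HB Require Import structures.
From mathcomp Require Import all_boot all_order all_algebra.
From mathcomp Require Import all_classical all_reals all_analysis.

Set Implicit Arguments.
Unset Strict Implicit.
Unset Printing Implicit Defensive.

Import Order.TTheory GRing.Theory Num.Theory.
Local Open Scope ring_scope.

Section FNO.
Variable R : realType.

Definition relu_v (n : nat) (v : 'cV[R]_n) : 'cV[R]_n :=
  map_mx (fun t => Num.max t 0) v.

(* the wave numbers |k| <= k_max = 1, indexed by k : 'I_3 as k - 1 *)
Definition wavenum (k : 'I_3) : R := (k%:R - 1).

(* parameters of one Fourier layer L_l, with cut-off k_max = 1.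
   Complex matrices P(k) and complex bias coefficients b^(k) are stored
   by their real and imaginary parts. *)
Record fno_layer (dv : nat) := FnoLayer {
  W_l  : 'M[R]_dv;
  Pre  : 'I_3 -> 'M[R]_dv;
  Pim  : 'I_3 -> 'M[R]_dv;
  bre  : 'I_3 -> 'cV[R]_dv;
  bim  : 'I_3 -> 'cV[R]_dv
}.

(* an FNO: lifting R (shallow ReLU network (u,x) |-> R^dv of width m),
   a list of Fourier layers, and a pointwise linear projection Q. *)
Record fno := Fno {
  dv : nat;
  lift_width : nat;
  RA : 'M[R]_(lift_width, 2);
  Rb : 'cV[R]_lift_width;
  RC : 'M[R]_(dv, lift_width);
  Rc : 'cV[R]_dv;
  layers : seq (fno_layer dv);
  Qp : 'rV[R]_dv
}.

Definition depth (F : fno) : nat := size (layers F).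

Definition fno_size (F : fno) : nat :=
  (lift_width F * 2 + lift_width F + dv F * lift_width F + dv F)
  + depth F * (dv F * dv F + 3 * 2 * (dv F * dv F) + 3 * 2 * dv F)
  + dv F.

(* grid points x_j = 2 pi j / N, j = 1..N *)
Definition grid (N : nat) (j : nat) : R := 2 * pi * j%:R / N%:R.

(* real and imaginary parts of the discrete Fourier coefficient
   F_N v(k) = 1/N sum_{j=1}^N v(x_j) e^{-i k x_j} *)
Definition dft_re (N : nat) (n : nat) (v : R -> 'cV[R]_n) (k : 'I_3) : 'cV[R]_n :=
  N%:R^-1 *: \sum_(1 <= j < N.+1) (cos (wavenum k * grid N j) *: v (grid N j)).
Definition dft_im (N : nat) (n : nat) (v : R -> 'cV[R]_n) (k : 'I_3) : 'cV[R]_n :=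
  - (N%:R^-1 *: \sum_(1 <= j < N.+1) (sin (wavenum k * grid N j) *: v (grid N j))).

(* real part of  sum_{|k|<=1} b^(k) e^{ikx} *)
Definition bias_eval (n : nat) (L : fno_layer n) (x : R) : 'cV[R]_n :=
  \sum_(k < 3) (cos (wavenum k * x) *: bre L k - sin (wavenum k * x) *: bim L k).

(* real part of  sum_{|k|<=1} P(k) F_N v(k) e^{ikx} *)
Definition spectral (N : nat) (n : nat) (L : fno_layer n) (v : R -> 'cV[R]_n)
    (x : R) : 'cV[R]_n :=
  \sum_(k < 3)
    (cos (wavenum k * x) *: (Pre L k *m dft_re N v k - Pim L k *m dft_im N v k)
     - sin (wavenum k * x) *: (Pre L k *m dft_im N v k + Pim L k *m dft_re N v k)).

Definition layer_apply (N : nat) (n : nat) (L : fno_layer n) (v : R -> 'cV[R]_n)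
    : R -> 'cV[R]_n :=
  fun x => relu_v (W_l L *m v x + bias_eval L x + spectral N L v x).

Definition lift_apply (F : fno) (u : R -> R) : R -> 'cV[R]_(dv F) :=
  fun x => RC F *m relu_v (RA F *m (\col_(i < 2) (if i == ord0 then u x else x)) + Rb F)
           + Rc F.

(* N^FNO(u)(x) = Q (L_L o ... o L_1 (R u))(x); layers listed in order L_1 ... L_L *)
Definition fno_eval (N : nat) (F : fno) (u : R -> R) (x : R) : R :=
  (Qp F *m foldl (fun v L => layer_apply N L v) (lift_apply F u) (layers F) x) ord0 ord0.

(* u = h 1_[-w/2,w/2](. - xi), with the indicator periodized *)
Definition periodic_box (h w xi : R) (x : R) : R :=
  if `[< exists k : int, `|x - xi - k%:~R * (2 * pi)| <= w / 2 >] then h else 0.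

End FNO.

From HB Require Import structures.
From mathcomp Require Import all_boot all_order all_algebra.
From mathcomp Require Import all_classical all_reals all_analysis.
From mathcomp Require Import ring lra zify.
Import Order.TTheory GRing.Theory Num.Theory.
Import numFieldNormedType.Exports.
Local Open Scope ring_scope.
Set Implicit Arguments.
Unset Strict Implicit.
Unset Printing Implicit Defensive.

(* One Fourier mode suffices.  The lifting maps the input h 1_box, h >= hlo, to
   the indicator chi of the box (as min (u / hlo, 1)); the Fourier layer keeps
   only the mode k = 1, multiplied by lam e^{-i theta}; its two channels carry
   plus and minus the result, so the ReLU followed by Q reproduces it exactly.
   Everything then rests on a quadrature estimate for the DFT of chi on the
   grid j d, d = 2 pi / N: since 2 sin (d/2) cos (j d - psi) is the difference
   of sin ((j +- 1/2) d - psi), summation by parts over one period leaves only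
   the two grid midpoints where the box is left and entered, which lie within
   d/2 of xi +- w/2.  Hence N sin (pi/N) F_N chi (1) is within O(1/N) of
   sin (w/2) e^{-i xi}, and rotating by theta gives the claim.  For the finitely
   many N too small for the grid to resolve the box, trivial bounds suffice. *)

Section PeriodicInterval.
Variables (N lo hi : int).
Hypotheses (lo_le_hi : lo <= hi) (hi_lo_gap : hi - lo + 2 <= N).

Definition in_pitv (n : int) : Prop := exists k : int, lo <= n - k * N <= hi.

Lemma in_pitv_exit n : (in_pitv n /\ ~ in_pitv (n + 1)) <-> (N %| n - hi)%Z.
Proof.
split=> [[[k hk] nout]|/dvdzP[k hk]].
  apply/dvdzP; exists k.
  have : ~ (lo <= n + 1 - k * N <= hi) by move=> h; apply: nout; exists k.
  lia.
split; first by exists k; lia.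
case=> k' hk'.
case: (ltgtP (k - k') 0) => hk''; nia.
Qed.

Lemma in_pitv_entry n : (~ in_pitv n /\ in_pitv (n + 1)) <-> (N %| n + 1 - lo)%Z.
Proof.
split=> [[nin [k hk]]|/dvdzP[k hk]].
  apply/dvdzP; exists k.
  have : ~ (lo <= n - k * N <= hi) by move=> h; apply: nin; exists k.
  lia.
split; last by exists k; lia.
case=> k' hk'.
case: (ltgtP (k - k') 0) => hk''; nia.
Qed.
End PeriodicInterval.

Section PeriodicSums.
Variables (R : ringType) (N : nat).
Hypothesis N_gt0 : (0 < N)%N.

Lemma sum_by_parts_cyclic (a b : nat -> R) : a N.+1 = a 1%N -> b N = b 0%N ->
  \sum_(1 <= j < N.+1) a j * (b j - b j.-1) =
  \sum_(1 <= j < N.+1) (a j - a j.+1) * b j.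
Proof.
move=> aN b0.
rewrite !(eq_bigr _ (fun j _ => mulrBl _ _ _)) !(eq_bigr _ (fun j _ => mulrBr _ _ _)).
rewrite !sumrB; congr (_ - _).
case: N N_gt0 aN b0 => // n _ aN b0.
by rewrite [LHS]big_nat_recl // [RHS]big_nat_recr //= aN -b0 addrC.
Qed.

Lemma sum_dvdz_periodic (F : int -> R) (m : int) :
  (forall n k : int, F (n + k * N%:Z) = F n) ->
  \sum_(1 <= j < N.+1) (if (N%:Z %| j%:Z - m)%Z then F j%:Z else 0) = F m.
Proof.
move=> Fper.
have [j0 [hj0 hd0]] : exists j0 : nat, (1 <= j0 <= N)%N /\ (N%:Z %| j0%:Z - m)%Z.
  have N0 : (0 < N%:Z)%R by lia.
  have := modz_ge0 (m - 1) (lt0r_neq0 N0); have := ltz_pmod (m - 1) N0.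
  have := divz_eq (m - 1) N%:Z.
  exists `|((m - 1) %% N%:Z)%Z|%N.+1; split; first lia.
  by apply/dvdzP; exists (- ((m - 1) %/ N%:Z)%Z); lia.
rewrite (bigD1_seq j0) /=; [|by rewrite mem_index_iota; lia|exact: iota_uniq].
rewrite hd0 big1_seq ?addr0 => [|j /andP [jj0 /[!mem_index_iota] jN]].
  by case/dvdzP: hd0 => k hk; rewrite -(Fper m k) -hk; congr F; lia.
case: ifP => // /dvdzP [k hk]; case/dvdzP: hd0 => k0 hk0.
move/eqP: jj0; have : (j%:Z - j0%:Z = (k - k0) * N%:Z)%R by lia.
case: (ltgtP (k - k0) 0) => hk'; nia.
Qed.
End PeriodicSums.

Section Trig.
Variable R : realType.

Lemma sinDz2pi (a : R) (q : int) : sin (a + q%:~R * (2 * pi)) = sin a.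
Proof.
case: q => n.
  by rewrite -[(Posz n)%:~R]/(n%:R : R) !mulr_natl; exact: periodicn (@sinD2pi R) n a.
rewrite NegzE mulrNz -[(Posz n.+1)%:~R]/(n.+1%:R : R) mulNr !mulr_natl.
have := periodicn (@sinD2pi R) n.+1 (a - (pi *+ 2) *+ n.+1).
by rewrite subrK => ->.
Qed.

Lemma dist_sin_le (a b : R) : `|sin b - sin a| <= `|b - a|.
Proof.
wlog ab : a b / a <= b.
  move=> H; case: (leP a b) => [/H//|/ltW ba].
  by rewrite distrC [`|b - a|]distrC; apply: H.
have [c _ ->] : exists2 c, c \in `[a, b]%R & sin b - sin a = cos c * (b - a).
  apply: (@MVT_segment R sin cos a b ab (fun x _ => is_derive_sin x)).
  by apply/continuous_subspaceT=> ?; exact: continuous_sin.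
by rewrite normrM -[X in _ <= X]mul1r ler_wpM2r // cos_max.
Qed.

Lemma sinD_sub_sinB (x y : R) : sin (x + y) - sin (x - y) = 2 * cos x * sin y.
Proof. by rewrite sinD sinB; ring. Qed.

Lemma rotation_err (x t p q P Q e : R) :
  `|p - P| <= e -> `|q - Q| <= e ->
  `|(cos x * (cos t * p - sin t * q) + sin x * (cos t * q + sin t * p))
    - (cos x * (cos t * P - sin t * Q) + sin x * (cos t * Q + sin t * P))| <= 4 * e.
Proof.
move=> pP qQ.
have bound (u v r : R) : `|u| <= 1 -> `|v| <= 1 -> `|r| <= e -> `|u * v * r| <= e.
  move=> u1 v1 re; rewrite !normrM.
  move: u1 v1 re (normr_ge0 u) (normr_ge0 v) (normr_ge0 r).
  move: `|u| `|v| `|r| => U V W U1 V1 We U0 V0 W0.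
  have : U * V <= 1 by nra.
  have : 0 <= U * V by nra.
  nra.
rewrite [X in `|X|](_ : _ = cos x * cos t * (p - P) - cos x * sin t * (q - Q)
  + (sin x * cos t * (q - Q) + sin x * sin t * (p - P))); last by ring.
apply: le_trans (ler_normD _ _) _; apply: le_trans (lerD (ler_normB _ _) (ler_normD _ _)) _.
have := bound _ _ _ (cos_max x) (cos_max t) pP; have := bound _ _ _ (cos_max x) (sin_max t) qQ.
have := bound _ _ _ (sin_max x) (cos_max t) qQ; have := bound _ _ _ (sin_max x) (sin_max t) pP.
lra.
Qed.

Lemma cos_sub_sub_expand (x xi t r : R) :
  cos x * (cos t * (r * cos xi) - sin t * (r * sin xi))
  + sin x * (cos t * (r * sin xi) + sin t * (r * cos xi)) = r * cos (x - xi - t).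
Proof.
have -> : x - xi - t = x - (xi + t) by ring.
by rewrite cosB cosD sinD; ring.
Qed.
End Trig.

Section PeriodicBox.
Variable R : realType.

Definition in_pbox (w xi t : R) : bool :=
  `[< exists k : int, `|t - xi - k%:~R * (2 * pi)| <= w / 2 >].

Lemma in_pbox_shift (w xi t : R) (q : int) :
  in_pbox w xi (t + q%:~R * (2 * pi)) = in_pbox w xi t.
Proof.
apply/asboolP/asboolP => -[k hk].
  by exists (k - q); rewrite intrB; congr (`|_| <= _): hk; ring.
by exists (k + q); rewrite intrD; congr (`|_| <= _): hk; ring.
Qed.

Lemma in_pbox_grid (w xi d : R) (N : nat) (n : int) :
  0 < d -> N%:R * d = 2 * pi ->
  in_pbox w xi (n%:~R * d) <->
  in_pitv N (Num.ceil ((xi - w / 2) / d)) (Num.floor ((xi + w / 2) / d)) n.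
Proof.
move=> d_gt0 Nd.
have dist k : (`|n%:~R * d - xi - k%:~R * (2 * pi)| <= w / 2) =
    (Num.ceil ((xi - w / 2) / d) <= n - k * N <= Num.floor ((xi + w / 2) / d)).
  rewrite ceil_le_int floor_ge_int (ler_pdivrMr _ _ d_gt0) (ler_pdivlMr _ _ d_gt0).
  rewrite ler_norml.
  rewrite -Nd intrB intrM.
  by apply/andP/andP => -[h1 h2]; split; lra.
by split=> [/asboolP[k hk]|[k hk]]; [exists k; rewrite -dist|apply/asboolP; exists k; rewrite dist].
Qed.
End PeriodicBox.

Section GridSum.
Variables (R : realType) (w xi psi d : R) (N : nat).
Hypotheses (d_gt0 : 0 < d) (Nd : N%:R * d = 2 * pi).
Hypotheses (d_le_w : d <= w) (wd_lt_2pi : w + d < 2 * pi).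

Local Notation lo := (Num.ceil ((xi - w / 2) / d)).
Local Notation hi := (Num.floor ((xi + w / 2) / d)).

Lemma lo_itv : lo%:~R * d - d < xi - w / 2 <= lo%:~R * d.
Proof.
have := ceil_itv ((xi - w / 2) / d).
by rewrite ltr_pdivlMr // ler_pdivrMr // intrB (mulrBl d) mul1r.
Qed.

Lemma hi_itv : hi%:~R * d <= xi + w / 2 < hi%:~R * d + d.
Proof.
have := floor_itv ((xi + w / 2) / d).
by rewrite ler_pdivlMr // ltr_pdivrMr // intrD1 (mulrDl _ _ d) mul1r.
Qed.

Lemma lo_le_hi : lo <= hi.
Proof.
have /andP[l1 _] := lo_itv; have /andP[_ h2] := hi_itv.
rewrite -ltzD1 -(ltr_int R) -(ltr_pM2r d_gt0) intrD1 (mulrDl _ _ d) mul1r.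
have := d_le_w; lra.
Qed.

Lemma hi_lo_gap : hi - lo + 2 <= N.
Proof.
have /andP[_ l2] := lo_itv; have /andP[h1 _] := hi_itv.
have : (hi - lo)%:~R * d < (N%:Z - 1)%:~R * d :> R.
  rewrite !intrB !(mulrBl d) mul1r -[N%:~R]/(N%:R : R) Nd.
  by have := wd_lt_2pi; lra.
rewrite ltr_pM2r // ltr_int; lia.
Qed.

Let on_grid n := in_pbox_grid w xi n d_gt0 Nd.

Lemma in_pbox_exit (n : int) :
  (in_pbox w xi (n%:~R * d) && ~~ in_pbox w xi ((n + 1)%:~R * d)) =
  (N%:Z %| n - hi)%Z.
Proof.
have exit := in_pitv_exit lo_le_hi hi_lo_gap n.
apply/idP/idP => [/andP[/on_grid nin /negP nout]|/exit[/on_grid -> nout]].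
  by apply/exit; split=> // /on_grid.
by apply/negP => /on_grid.
Qed.

Lemma in_pbox_entry (n : int) :
  (~~ in_pbox w xi (n%:~R * d) && in_pbox w xi ((n + 1)%:~R * d)) =
  (N%:Z %| n + 1 - lo)%Z.
Proof.
have entry := in_pitv_entry lo_le_hi hi_lo_gap n.
apply/idP/idP => [/andP[/negP nout /on_grid nin]|/entry[nout /on_grid ->]].
  by apply/entry; split=> // /on_grid.
by rewrite andbT; apply/negP => /on_grid.
Qed.

Let chi (j : nat) : R := (in_pbox w xi (j%:R * d))%:R.
(* [2 sin (d/2) cos (j d - psi) = G j - G (j - 1)] *)
Let G (n : int) : R := sin (n%:~R * d + d / 2 - psi).

Lemma chi_step (j : nat) : (chi j - chi j.+1) * G j =
  (if (N%:Z %| j%:Z - hi)%Z then G j else 0) -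
  (if (N%:Z %| j%:Z + 1 - lo)%Z then G j else 0).
Proof.
rewrite -in_pbox_exit -in_pbox_entry intrD1 natr1 /chi.
by case: in_pbox; case: in_pbox => /=; rewrite ?subrr ?subr0 ?sub0r ?mul0r ?mul1r ?mulN1r.
Qed.

Lemma G_periodic (n k : int) : G (n + k * N%:Z) = G n.
Proof.
rewrite /G -[in RHS](sinDz2pi _ k) -Nd; congr sin.
by rewrite intrD intrM; ring.
Qed.

Lemma G_hi_near : `|G hi - sin (xi + w / 2 - psi)| <= d / 2.
Proof.
have /andP[h1 h2] := hi_itv.
apply: le_trans (dist_sin_le _ _) _.
by rewrite /G distrC ler_norml; apply/andP; split; lra.
Qed.

Lemma G_lo_near : `|G (lo - 1) - sin (xi - w / 2 - psi)| <= d / 2.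
Proof.
have /andP[l1 l2] := lo_itv.
apply: le_trans (dist_sin_le _ _) _.
by rewrite /G intrB (mulrBl d) mul1r distrC ler_norml; apply/andP; split; lra.
Qed.

Lemma grid_sum_pbox_cos :
  `| 2 * sin (d / 2) *
       \sum_(1 <= j < N.+1) cos (j%:R * d - psi) * (in_pbox w xi (j%:R * d))%:R
     - 2 * sin (w / 2) * cos (xi - psi)| <= d.
Proof.
have N_gt0 : (0 < N)%N.
  by case: N Nd => // /esym; rewrite mul0r; have : 0 < pi :> R := pi_gt0 R; lra.
have telescope : 2 * sin (d / 2) *
    \sum_(1 <= j < N.+1) cos (j%:R * d - psi) * (in_pbox w xi (j%:R * d))%:R =
    \sum_(1 <= j < N.+1) chi j * (G j - G j.-1).
  rewrite big_distrr; apply: eq_big_nat => -[//|j] _ /=.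
  rewrite /chi /G; case: in_pbox; rewrite ?mul0r ?mulr0 // mul1r mulr1.
  rewrite -[(j%:Z)%:~R]/(j%:R : R) -[(j.+1%:Z)%:~R]/(j.+1%:R : R).
  transitivity (sin ((j.+1%:R * d - psi) + d / 2) - sin ((j.+1%:R * d - psi) - d / 2)).
    by rewrite sinD_sub_sinB; ring.
  by congr (sin _ - sin _); rewrite -?natr1; field.
have chi_per : chi N.+1 = chi 1.
  rewrite /chi -[in RHS](in_pbox_shift _ _ _ 1) -Nd; congr (in_pbox _ _ _)%:R.
  by rewrite -natr1; ring.
have G_per : G N = G 0 by rewrite -(add0r N%:Z) -(mul1r N%:Z) G_periodic.
rewrite telescope (sum_by_parts_cyclic N_gt0 chi_per G_per).
rewrite (eq_bigr _ (fun j _ => chi_step j)) sumrB (sum_dvdz_periodic N_gt0 _ G_periodic).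
have -> : \sum_(1 <= j < N.+1) (if (N%:Z %| j%:Z + 1 - lo)%Z then G j else 0) = G (lo - 1).
  rewrite -(sum_dvdz_periodic N_gt0 (lo - 1) G_periodic).
  by apply: eq_bigr => j _; rewrite opprB addrA.
have -> : 2 * sin (w / 2) * cos (xi - psi) = sin (xi + w / 2 - psi) - sin (xi - w / 2 - psi).
  by rewrite mulrAC -sinD_sub_sinB; congr (sin _ - sin _); ring.
rewrite (_ : G hi - G (lo - 1) - _ =
  (G hi - sin (xi + w / 2 - psi)) - (G (lo - 1) - sin (xi - w / 2 - psi))); last by ring.
apply: le_trans (ler_normB _ _) _.
by have := G_hi_near; have := G_lo_near; lra.
Qed.

End GridSum.

Section GridSumBound.
Variables (R : realType) (wlo whi : R).

(* For N >= grid_threshold the step d = 2 pi / N satisfies d <= wlo and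
   whi + d < 2 pi, the hypotheses of grid_sum_pbox_cos. *)
Definition grid_threshold : R := 2 * pi / wlo + 4 * pi / (2 * pi - whi).
Definition grid_err : R := 2 * pi + (2 * grid_threshold + 2) * grid_threshold.

Lemma grid_err_gt0 : 0 < wlo -> whi < 2 * pi -> 0 < grid_err.
Proof.
move=> wlo_gt0 whi_lt; have pi_gt0 : 0 < pi :> R := pi_gt0 R.
have : 0 < grid_threshold by apply: addr_gt0; apply: divr_gt0; lra.
by rewrite /grid_err; nra.
Qed.

Lemma grid_sum_pbox_cos_crude (w xi psi : R) (N : nat) :
  `| 2 * sin (pi / N%:R) *
       \sum_(1 <= j < N.+1) cos (grid R N j - psi) * (in_pbox w xi (grid R N j))%:R
     - 2 * sin (w / 2) * cos (xi - psi)| <= 2 * N%:R + 2.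
Proof.
have sum_le : `|\sum_(1 <= j < N.+1) cos (grid R N j - psi) * (in_pbox w xi (grid R N j))%:R|
    <= N%:R.
  apply: le_trans (ler_norm_sum _ _ _) _.
  have -> : (N%:R : R) = \sum_(1 <= j < N.+1) 1 by rewrite sumr_const_nat subn1.
  apply: ler_sum => j _; rewrite normrM.
  by case: in_pbox; rewrite ?normr0 ?mulr0 // normr1 mulr1 cos_max.
apply: le_trans (ler_normB _ _) _; rewrite !normrM ger0_norm //.
move: sum_le; set S := `|\sum_(_ <= _ < _) _| => sum_le.
have S_ge0 : 0 <= S := normr_ge0 _.
have := @sin_max R (pi / N%:R); have := @sin_max R (w / 2); have := @cos_max R (xi - psi).
have := normr_ge0 (sin (pi / N%:R)); have := normr_ge0 (sin (w / 2)).
have := normr_ge0 (cos (xi - psi)).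
nra.
Qed.

Lemma grid_sum_pbox_cos_err (w xi psi : R) (N : nat) :
  0 < wlo -> wlo <= w -> w <= whi -> whi < 2 * pi -> (0 < N)%N ->
  `| 2 * sin (pi / N%:R) *
       \sum_(1 <= j < N.+1) cos (grid R N j - psi) * (in_pbox w xi (grid R N j))%:R
     - 2 * sin (w / 2) * cos (xi - psi)| <= grid_err / N%:R.
Proof.
move=> wlo_gt0 wlo_w w_whi whi_lt N_gt0.
have pi_gt0 : 0 < pi :> R := pi_gt0 R.
have Nr_gt0 : 0 < N%:R :> R by rewrite ltr0n.
have M1 : 0 < 2 * pi / wlo by rewrite divr_gt0 //; lra.
have M2 : 0 < 4 * pi / (2 * pi - whi) by rewrite divr_gt0 //; lra.
have M_gt0 : 0 < grid_threshold by rewrite /grid_threshold; lra.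
have [N_small|N_large] := ltP N%:R grid_threshold.
  apply: le_trans (grid_sum_pbox_cos_crude _ _ _ _) _.
  rewrite ler_pdivlMr // /grid_err; nra.
pose d : R := 2 * pi / N%:R.
have d_gt0 : 0 < d by rewrite divr_gt0 //; lra.
have Nd : N%:R * d = 2 * pi by rewrite /d mulrC divfK // gt_eqF.
have d_le_wlo : d <= wlo.
  rewrite /d ler_pdivrMr // -ler_pdivrMl //.
  by move: N_large; rewrite /grid_threshold; lra.
have d_le : 2 * d <= 2 * pi - whi.
  rewrite /d mulrA ler_pdivrMr // -ler_pdivrMl; last lra.
  by move: N_large; rewrite /grid_threshold mulrA; lra.
have gridE j : grid R N j = j%:R * d by rewrite /grid /d; ring.
have -> : pi / N%:R = d / 2 by rewrite /d; field; rewrite gt_eqF.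
under eq_bigr do rewrite gridE.
apply: le_trans (grid_sum_pbox_cos xi psi d_gt0 Nd _ _) _; try lra.
rewrite /d ler_pM2r ?invr_gt0 // /grid_err.
by rewrite lerDl; apply: mulr_ge0; lra.
Qed.

Lemma grid_mean_pbox_cos_err (w xi psi : R) (N : nat) :
  0 < wlo -> wlo <= w -> w <= whi -> whi < 2 * pi -> (0 < N)%N ->
  `| N%:R * sin (pi / N%:R) * (N%:R^-1 *
       \sum_(1 <= j < N.+1) cos (grid R N j - psi) * (in_pbox w xi (grid R N j))%:R)
     - sin (w / 2) * cos (xi - psi)| <= grid_err / N%:R / 2.
Proof.
move=> wlo_gt0 wlo_w w_whi whi_lt N_gt0.
have Nr_gt0 : 0 < N%:R :> R by rewrite ltr0n.
set S := \sum_(_ <= _ < _) _.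
have -> : N%:R * sin (pi / N%:R) * (N%:R^-1 * S) - sin (w / 2) * cos (xi - psi) =
    (2 * sin (pi / N%:R) * S - 2 * sin (w / 2) * cos (xi - psi)) / 2.
  by field; rewrite gt_eqF.
rewrite normrM [`|2^-1|]ger0_norm ?invr_ge0 // ler_pM2r ?invr_gt0 //.
exact: grid_sum_pbox_cos_err.
Qed.
End GridSumBound.

Section Mode1FNO.
Variable R : realType.

Definition sgn2 (i : 'I_2) : R := if i == ord0 then 1 else -1.

(* Lifting: relu (u / hlo) - relu (u / hlo - 1) on both channels.  Layer: W = 0,
   no bias, P (1) = (a + i b) E where E copies channel 0 with signs (+, -).
   Projection: Q = (1, -1). *)
Definition mode1_fno (hlo a b : R) : fno R :=
  let E := \matrix_(i, j) (if j == ord0 then sgn2 i else 0) in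
  @Fno R 2 2
    (\matrix_(i, j) (if j == ord0 then hlo^-1 else 0))
    (\col_i (if i == ord0 then 0 else -1))
    (\matrix_(i, j) sgn2 j)
    0
    [:: @FnoLayer R 2 0
         (fun k => if k == ord_max then a *: E else 0)
         (fun k => if k == ord_max then b *: E else 0)
         (fun _ => 0) (fun _ => 0)]
    (\row_j sgn2 j).

Lemma relu_sub_reluN (t : R) : Num.max t 0 - Num.max (- t) 0 = t.
Proof.
by rewrite !maxEle oppr_le0; do 2 case: leP => ?; lra.
Qed.

Lemma mode1_fno_size (hlo a b : R) : fno_size (mode1_fno hlo a b) = 54%N.
Proof. by []. Qed.

Lemma lift_mode1 (hlo a b h w xi y : R) (i : 'I_2) :
  0 < hlo -> hlo <= h ->
  lift_apply (mode1_fno hlo a b) (periodic_box h w xi) y i ord0 = (in_pbox w xi y)%:R.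
Proof.
move=> hlo_gt0 hlo_h.
rewrite /lift_apply /= !mxE !big_ord_recl big_ord0 /= /relu_v !mxE.
rewrite !big_ord_recl !big_ord0 /= !mxE /= /sgn2 /periodic_box /=.
rewrite !mul0r !addr0 ?mulr0.
have h_ge : 1 <= hlo^-1 * h by rewrite mulrC ler_pdivlMr // mul1r.
rewrite -/(in_pbox w xi y); case: in_pbox => /=.
  by rewrite max_l ?max_l; [ring | lra | lra].
by rewrite ?mulr0 ?addr0 max_l // max_r; [ring | lra].
Qed.

Lemma eval_mode1 (N : nat) (hlo a b h w xi x : R) :
  0 < hlo -> hlo <= h ->
  let c := N%:R^-1 * \sum_(1 <= j < N.+1) cos (grid R N j) * (in_pbox w xi (grid R N j))%:R in
  let s := N%:R^-1 * \sum_(1 <= j < N.+1) sin (grid R N j) * (in_pbox w xi (grid R N j))%:R in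
  fno_eval N (mode1_fno hlo a b) (periodic_box h w xi) x =
  cos x * (a * c + b * s) + sin x * (a * s - b * c).
Proof.
move=> hlo_gt0 hlo_h c s.
rewrite /fno_eval /=.
set v := lift_apply _ _.
have hv y i : v y i ord0 = (in_pbox w xi y)%:R by exact: lift_mode1.
have w1 : wavenum R ord_max = 1 by rewrite /wavenum /=; ring.
have dft_cos i : (\sum_(1 <= j < N.+1) cos (wavenum R ord_max * grid R N j) *: v (grid R N j))
    i ord0 = \sum_(1 <= j < N.+1) cos (grid R N j) * (in_pbox w xi (grid R N j))%:R.
  by rewrite summxE; apply: eq_bigr => j _; rewrite mxE hv w1 mul1r.
have dft_sin i : (\sum_(1 <= j < N.+1) sin (wavenum R ord_max * grid R N j) *: v (grid R N j))
    i ord0 = \sum_(1 <= j < N.+1) sin (grid R N j) * (in_pbox w xi (grid R N j))%:R.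
  by rewrite summxE; apply: eq_bigr => j _; rewrite mxE hv w1 mul1r.
set L := (X in layer_apply N X v x).
have sp i : spectral N L v x i ord0 =
    sgn2 i * (cos x * (a * c + b * s) + sin x * (a * s - b * c)).
  rewrite /spectral summxE (bigD1 ord_max) //= big1 ?addr0; last first.
    by move=> k /negbTE hk; rewrite hk !mul0mx !mxE; ring.
  rewrite !mxE !big_ord_recl !big_ord0 /= !mxE /= !dft_cos !dft_sin w1 !mul1r -/c -/s.
  ring.
have bias0 : bias_eval L x = 0.
  by rewrite /bias_eval big1 // => k _; rewrite /= !scaler0 subrr.
rewrite /layer_apply bias0 mul0mx !add0r /relu_v.
rewrite !mxE !big_ord_recl !big_ord0 /= !mxE !sp /sgn2 /=.
by rewrite !mul1r !mulN1r ?addr0 relu_sub_reluN.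
Qed.

End Mode1FNO.

Theorem mainTheorem11 (R : realType) (hlo hhi wlo whi theta : R) :
  0 < hlo -> hlo <= hhi -> 0 < wlo -> wlo <= whi -> whi < 2 * pi ->
  exists C : R, 0 < C /\
    forall N : nat, (0 < N)%N ->
      exists F : fno R,
        (dv F)%:R <= C /\ (depth F)%:R <= C /\ (fno_size F)%:R <= C /\
        forall h w xi x : R,
          hlo <= h -> h <= hhi -> wlo <= w -> w <= whi ->
          0 <= xi -> xi <= 2 * pi -> 0 <= x -> x <= 2 * pi ->
          `| fno_eval N F (periodic_box h w xi) x - sin (w / 2) * cos (x - xi - theta) |
            <= C / N%:R.
Proof.
move=> hlo_gt0 _ wlo_gt0 wlo_whi whi_lt.
set K := grid_err wlo whi; have K_gt0 : 0 < K := grid_err_gt0 wlo_gt0 whi_lt.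
exists (54 + 2 * K); split=> [|N N_gt0]; first lra.
pose lam : R := N%:R * sin (pi / N%:R).
exists (mode1_fno hlo (lam * cos theta) (- (lam * sin theta))).
rewrite mode1_fno_size /depth /=; split; [lra|split; [lra|split; [lra|]]].
move=> h w xi x hlo_h _ wlo_w w_whi _ _ _ _.
rewrite eval_mode1 //.
set c := _ * \sum_(_ <= _ < _) _; set s := _ * \sum_(_ <= _ < _) _.
have err psi := grid_mean_pbox_cos_err xi psi wlo_gt0 wlo_w w_whi whi_lt N_gt0.
have err_c : `|lam * c - sin (w / 2) * cos xi| <= K / N%:R / 2.
  by have := err 0; under eq_bigr do rewrite subr0; rewrite subr0.
have err_s : `|lam * s - sin (w / 2) * sin xi| <= K / N%:R / 2.
  by have := err (pi / 2); under eq_bigr do rewrite cosBpihalf; rewrite cosBpihalf.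
rewrite -(cos_sub_sub_expand x) [X in `|X - _|](_ : _ =
  cos x * (cos theta * (lam * c) - sin theta * (lam * s))
  + sin x * (cos theta * (lam * s) + sin theta * (lam * c))); last by ring.
apply: le_trans (rotation_err _ _ err_c err_s) _.
have Nr_gt0 : 0 < N%:R :> R by rewrite ltr0n.
rewrite (_ : 4 * _ = 2 * K / N%:R); last by field; rewrite gt_eqF.
by rewrite ler_pM2r ?invr_gt0 //; lra.
Qed.
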